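(* Assume that the presentation $\mathcal{P}^{[2]}_r(e,b)$ is consistent and that the test equations \begin{align*} c(a_k c(a_j a_i)) &= c(c(a_k a_j) a_i) & (w(a_k)+w(a_j)+w(a_i) \leq d),\\ c(r_j c(a_j a_i)) &= c( c(r_j a_j) a_i) & (r_j < \infty,\ w(a_j)+w(a_i) \leq d),\\ c(r_i c(a_j a_i )) &= c( a_j c( r_i a_i)) & (r_i < \infty,\ w(a_j)+w(a_i) \leq d) \end{align*} hold. Then $\tau_L$ and $\tau_R$ induce $R$-linear maps $\varphi_L, \varphi_R \colon A^{[2]} \rightarrow A^{[2]}$.
   Context: Let $R$ be a field or the ring of integers; all algebras are associative. $\mathcal{P}_r(e,b)$ is a nilpotent presentation on generators $a_1,\ldots,a_n$ with $r_1,\ldots,r_n \in \mathbb N \cup \{\infty\}$ and $e_{i,k}, b_{i,j,k} \in R$ (with $0 \leq e_{i,k}, b_{i,j,k} < r_k$ whenever $r_k<\infty$) and relations $r_i a_i = e_{i,i+1} a_{i+1} + \ldots + e_{i,n} a_n$ (for $r_i<\infty$) and $a_j a_i = b_{i,j,\ell+1} a_{\ell+1} + \ldots + b_{i,j,n} a_n$ with $\ell = \max\{i,j\}$ (for $1\le i,j\le n$). For $1 \le k \le n$, $\mathcal{P}^{[k]}_r(e,b)$ is the presentation on $a_k,\ldots,a_n$ whose relations are those relations of $\mathcal{P}_r(e,b)$ involving only these generators; $A^{[k]}$ is the algebra it defines and $F_k$ is the free associative algebra on $a_k,\ldots,a_n$. A presentation is consistent if each element of the defined algebra is represented by a unique reduced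 form $x_1a_1+\ldots+x_na_n$ ($0\le x_i<r_i$ if $r_i<\infty$). $c$ denotes the function on the free algebra induced by the collection algorithm, mapping an element to one of its reduced forms. $w$ is a weight function: $w(a_i)\in\mathbb N$ minimal subject to $w(a_k)\ge w(a_i)$ whenever $e_{i,k}\neq0$ and $w(a_k)\ge w(a_i)+w(a_j)$ whenever $b_{i,j,k}\ne 0$; $d=\max\{w(a_1),\ldots,w(a_n)\}$. The maps $\tau_L,\tau_R\colon F_2\to F_2$ are defined by $\tau_L(a_j)=\sum_{k=1}^n b_{j,1,k}a_k$ with $\tau_L(vw)=\tau_L(v)w$ for all $v,w\in F_2$, and $\tau_R(a_j)=\sum_{k=1}^n b_{1,j,k}a_k$ with $\tau_R(vw)=v\tau_R(w)$ for all $v,w\in F_2$ (i.e. left resp. right multiplication by $a_1$ expressed via the relations). *)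

From mathcomp Require Import all_boot all_order all_algebra.
Set Implicit Arguments. Unset Strict Implicit. Unset Printing Implicit Defensive.
Import Order.TTheory GRing.Theory Num.Theory.
Local Open Scope ring_scope.

(* Generators a_1, ..., a_n are indexed by the natural numbers 1..n.
   [pr i = None] encodes r_i = infinity, [pr i = Some q] encodes r_i = q.
   [pe i k] = e_{i,k}, [pb i j k] = b_{i,j,k}; only the values with
   k > i (resp. k > max i j) and 1 <= i,j,k <= n are ever used. *)
Record presentation (R : Type) := Pres {
  pn : nat;
  pr : nat -> option nat;
  pe : nat -> nat -> R;
  pb : nat -> nat -> nat -> R }.

Section Pres.
Variable R : comNzRingType.
(* [crange x q] : the admissible range "0 <= x < q" for coefficients
   (for R = int: 0 <= x < q; for a field all r_i are infinite so it is unused).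
   [cdiv x q] : (quotient, remainder) of x by the relative order q. *)
Variable crange : R -> nat -> bool.
Variable cdiv : R -> nat -> R * R.
Variable P : presentation R.

Local Notation n := (pn P).
Local Notation r := (pr P).
Local Notation e := (pe P).
Local Notation b := (pb P).

Definition inrng (k i : nat) : bool := (k <= i <= n)%N.

Definition wf_pres : Prop :=
  (forall i q, inrng 1 i -> r i = Some q -> (0 < q)%N) /\
  (forall i k q, inrng 1 i -> inrng 1 k -> (i < k)%N -> r i <> None ->
      r k = Some q -> crange (e i k) q) /\
  (forall i j k q, inrng 1 i -> inrng 1 j -> inrng 1 k -> (maxn i j < k)%N ->
      r k = Some q -> crange (b i j k) q).

(* An element of the free algebra is represented by its coefficient function
   on words (words = seq nat, letter i standing for a_i). *)
Definition felem := seq nat -> R.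

Definition inF (k : nat) (x : felem) : Prop :=
  (exists s : seq (seq nat), forall w, x w != 0 -> w \in s) /\
  (forall w, x w != 0 -> w != [::] /\ all (inrng k) w).

Definition fword (u : seq nat) : felem := fun w => (w == u)%:R.
Definition fadd (x y : felem) : felem := fun w => x w + y w.
Definition fsub (x y : felem) : felem := fun w => x w - y w.
Definition fscale (c : R) (x : felem) : felem := fun w => c * x w.
Definition fzero : felem := fun _ => 0.

(* u * x * v for words u, v (possibly empty) and x in the free algebra *)
Definition sandwich (u v : seq nat) (x : felem) : felem := fun w =>
  if [&& (size u + size v <= size w)%N, take (size u) w == u &
         drop (size w - size v) w == v]
  then x (take (size w - size u - size v) (drop (size u) w)) else 0.

Definition powrel (i q : nat) : felem := fun w =>
  q%:R * fword [:: i] w - \sum_(i.+1 <= k < n.+1) e i k * fword [:: k] w.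
Definition mulrel (i j : nat) : felem := fun w =>
  fword [:: j; i] w - \sum_((maxn i j).+1 <= k < n.+1) b i j k * fword [:: k] w.

Definition isrel (k : nat) (rho : felem) : Prop :=
  (exists i q, inrng k i /\ r i = Some q /\ rho = powrel i q) \/
  (exists i j, inrng k i /\ inrng k j /\ rho = mulrel i j).

(* the two-sided ideal of F_k generated by the relations of P^{[k]};
   A^{[k]} = F_k / ideal k. *)
Inductive ideal (k : nat) : felem -> Prop :=
| ideal0 : ideal k fzero
| idealD x y : ideal k x -> ideal k y -> ideal k (fadd x y)
| idealZ c x : ideal k x -> ideal k (fscale c x)
| idealG u v rho : all (inrng k) u -> all (inrng k) v -> isrel k rho ->
    ideal k (sandwich u v rho).

Definition cvec := nat -> R.
Definition reduced (k : nat) (y : cvec) : Prop :=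
  forall i q, inrng k i -> r i = Some q -> crange (y i) q.
Definition lin (k : nat) (y : cvec) : felem := fun w =>
  match w with [:: i] => if inrng k i then y i else 0 | _ => 0 end.

Definition consistent (k : nat) : Prop :=
  (forall x, inF k x -> exists y, reduced k y /\ ideal k (fsub x (lin k y))) /\
  (forall y y', reduced k y -> reduced k y' -> ideal k (fsub (lin k y) (lin k y')) ->
     forall i, inrng k i -> y i = y' i).

Definition weight_ok (w : nat -> nat) : Prop :=
  (forall i, inrng 1 i -> (1 <= w i)%N) /\
  (forall i k, inrng 1 i -> inrng 1 k -> (i < k)%N -> r i <> None ->
      e i k != 0 -> (w i <= w k)%N) /\
  (forall i j k, inrng 1 i -> inrng 1 j -> inrng 1 k -> (maxn i j < k)%N ->
      b i j k != 0 -> (w i + w j <= w k)%N).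
Definition is_weight (w : nat -> nat) : Prop :=
  weight_ok w /\ forall w', weight_ok w' -> forall i, inrng 1 i -> (w i <= w' i)%N.
Definition wmax (w : nat -> nat) : nat := \max_(1 <= i < n.+1) w i.

Definition cgen (i : nat) : cvec := fun k => (k == i)%:R.
(* (sum_j u_j a_j) (sum_i v_i a_i) expanded with the relations a_j a_i = ... *)
Definition cmul (u v : cvec) : cvec := fun k =>
  if inrng 1 k then
    \sum_(1 <= j < n.+1) \sum_(1 <= i < n.+1)
       (if (maxn i j < k)%N then u j * v i * b i j k else 0)
  else 0.
Definition cscale (q : nat) (v : cvec) : cvec := fun k => q%:R * v k.
(* reduction of coefficients with the power relations, from a_1 up to a_n *)
Definition cstep (m : nat) (v : cvec) : cvec :=
  match r m with
  | None => v
  | Some q => let qr := cdiv (v m) q in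
      fun k => if k == m then qr.2
               else if (m < k <= n)%N then v k + qr.1 * e m k else v k
  end.
Definition collect (v : cvec) : cvec := foldl (fun v m => cstep m v) v (iota 1 n).
Definition veq (u v : cvec) : Prop := forall m, inrng 1 m -> u m = v m.

Definition test_eqs (w : nat -> nat) : Prop :=
  (forall i j k, inrng 1 i -> inrng 1 j -> inrng 1 k ->
     (w k + w j + w i <= wmax w)%N ->
     veq (collect (cmul (cgen k) (collect (cmul (cgen j) (cgen i)))))
         (collect (cmul (collect (cmul (cgen k) (cgen j))) (cgen i)))) /\
  (forall i j q, inrng 1 i -> inrng 1 j -> r j = Some q ->
     (w j + w i <= wmax w)%N ->
     veq (collect (cscale q (collect (cmul (cgen j) (cgen i)))))
         (collect (cmul (collect (cscale q (cgen j))) (cgen i)))) /\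
  (forall i j q, inrng 1 i -> inrng 1 j -> r i = Some q ->
     (w j + w i <= wmax w)%N ->
     veq (collect (cscale q (collect (cmul (cgen j) (cgen i)))))
         (collect (cmul (cgen j) (collect (cscale q (cgen i)))))).

(* tau_L(a_j w') = (sum_k b_{j,1,k} a_k) w', extended linearly; written
   coefficientwise: coefficient of a_k w' in tau_L x. *)
Definition tauL (x : felem) : felem := fun w =>
  match w with
  | [::] => 0
  | k :: w' => if (k <= n)%N then \sum_(2 <= j < k) b j 1 k * x (j :: w') else 0
  end.
(* tau_R(w' a_j) = w' (sum_k b_{1,j,k} a_k), extended linearly. *)
Definition tauR (x : felem) : felem := fun w =>
  match w with
  | [::] => 0
  | h :: t => let k := last h t in
      if (k <= n)%N then \sum_(2 <= j < k) b 1 j k * x (rcons (belast h t) j) else 0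
  end.

(* t : F_k -> F_k is R-linear and induces a (necessarily R-linear) map
   A^{[k]} -> A^{[k]}, i.e. it maps F_k to F_k and preserves the ideal. *)
Definition induces_linear_map (k : nat) (t : felem -> felem) : Prop :=
  (forall x, inF k x -> inF k (t x)) /\
  (forall c x y, t (fadd (fscale c x) y) = fadd (fscale c (t x)) (t y)) /\
  (forall x, ideal k x -> ideal k (t x)).

End Pres.

Definition int_range (x : int) (q : nat) : bool := (0 <= x) && (x < q%:Z).
Definition int_div (x : int) (q : nat) : int * int := ((x %/ q%:Z)%Z, (x %% q%:Z)%Z).
(* for a field all r_i are infinite, so these are never used *)
Definition triv_range (R : Type) (x : R) (q : nat) : bool := true.
Definition triv_div (R : nzRingType) (x : R) (q : nat) : R * R := (0, x).

(* tau_L is left multiplication by a_1 read through the relations; it is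
   R-linear and preserves F_2, so the point is that it maps the ideal I of
   relations of P^[2] into itself.  Since tau_L (a_j u rho v) is a combination
   of the a_k u rho v and tau_L (rho v) = tau_L (rho) v, it suffices that
   tau_L (rho) lies in I for every relator rho.
   Modulo I, collection only adds multiples of power relations, so each test
   equation becomes a congruence.  The third one with a_j = a_1, together with
   a downward induction on i, shows that a_1 times the power relation of a_i
   vanishes in A^[2]; granted this, the first one with a_k = a_1 says
   (a_1 a_j) a_i = a_1 (a_j a_i) in A^[2], and this is tau_L of the relation
   for a_j a_i.  Products of weight above d vanish outright.  tau_R is tau_L
   for the opposite presentation, transported along word reversal. *)

From mathcomp Require Import all_boot all_order all_algebra.
From mathcomp Require Import ring zify.
From Stdlib Require Import FunctionalExtensionality.
Set Implicit Arguments. Unset Strict Implicit. Unset Printing Implicit Defensive.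
Import GRing.Theory.
Local Open Scope ring_scope.

Local Ltac range := unfold inrng in *; lia.

Lemma cat_middle_inj (T : Type) (u v w0 w1 : seq T) :
  u ++ w0 ++ v = u ++ w1 ++ v -> w0 = w1.
Proof.
move/(congr1 (drop (size u))); rewrite !drop_size_cat //.
move/(congr1 (fun s => take (size s - size v) s)).
by rewrite !size_cat !addnK !take_size_cat.
Qed.

Section Sums.
Variable R : comNzRingType.

Lemma sum_nat_delta (a b x : nat) (f : nat -> R) :
  \sum_(a <= l < b) (if l == x then f l else 0) = if (a <= x < b)%N then f x else 0.
Proof. by rewrite -big_mkcond big_nat1_eq. Qed.

Lemma sum_nat_mul_delta (a b x : nat) (f : nat -> R) :
  \sum_(a <= l < b) f l * (x == l)%:R = if (a <= x < b)%N then f x else 0.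
Proof.
rewrite -sum_nat_delta; apply: eq_bigr => l _.
by rewrite eq_sym; case: eqP; rewrite ?mulr1 ?mulr0.
Qed.

Lemma sum_nat_neq0 (a b : nat) (f : nat -> R) :
  \sum_(a <= l < b) f l != 0 -> exists2 l, (a <= l < b)%N & f l != 0.
Proof.
move=> hf; have /hasP[l hl fl] : has (fun l => f l != 0) (index_iota a b).
  apply: contraR hf => /hasPn f0; rewrite big_seq big1 // => l /f0.
  by rewrite negbK => /eqP.
by exists l; rewrite // -mem_index_iota.
Qed.

Lemma eq_of_sub_eq (x y l r : R) : l = r -> x - y = r - l -> x = y.
Proof. by move=> -> /eqP; rewrite subrr subr_eq0 => /eqP. Qed.

End Sums.

Section FreeAlgebra.
Variables (R : comNzRingType) (P : presentation R).
Local Notation n := (pn P).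
Local Notation b := (pb P).
Local Notation I := (ideal P 2).

Lemma ideal_eq (x y : felem R) : I x -> x =1 y -> I y.
Proof. by move=> hx /functional_extensionality <-. Qed.

Lemma ideal_sub (x y : felem R) : I x -> I y -> I (fsub x y).
Proof.
move=> hx hy; apply: ideal_eq (idealD hx (idealZ (-1) hy)) _ => w.
by rewrite /fadd /fscale mulN1r.
Qed.

Lemma ideal_sum (s : seq nat) (c : nat -> R) (f : nat -> felem R) :
  (forall k, k \in s -> I (f k)) -> I (fun w => \sum_(k <- s) c k * f k w).
Proof.
elim: s => [|k s IH] hf.
  by apply: ideal_eq (ideal0 P 2) _ => w; rewrite big_nil.
have hs : I (fun w => \sum_(k <- s) c k * f k w).
  by apply: IH => k' hk'; apply: hf; rewrite inE hk' orbT.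
apply: ideal_eq (idealD (idealZ (c k) (hf k (mem_head k s))) hs) _ => w.
by rewrite big_cons.
Qed.

Lemma ideal_rel (rho : felem R) : isrel P 2 rho -> I rho.
Proof.
move=> hrho; apply: ideal_eq (idealG (u := [::]) (v := [::]) isT isT hrho) _ => w.
by rewrite /sandwich /= !subn0 drop_size take0 eqxx drop0 take_size.
Qed.

Variant sandwich_spec (u v : seq nat) (x : felem R) (w : seq nat) : R -> Prop :=
| SandwichCat w0 of w = u ++ w0 ++ v : sandwich_spec u v x w (x w0)
| SandwichNone of (forall w0, w <> u ++ w0 ++ v) : sandwich_spec u v x w 0.

Lemma sandwichP u v x w : sandwich_spec u v x w (sandwich u v x w).
Proof.
rewrite /sandwich; case: ifP => [/and3P[hs /eqP hu /eqP hv]|hf].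
  apply: SandwichCat; rewrite -{1}(cat_take_drop (size u) w) hu; congr (_ ++ _).
  set k := (size w - size u - size v)%N.
  rewrite -{1}(cat_take_drop k (drop (size u) w)) drop_drop; congr (_ ++ _).
  by rewrite (_ : (k + size u = size w - size v)%N) ?hv // /k; lia.
apply: SandwichNone => w0 hw; move: hf; rewrite hw !size_cat take_size_cat // eqxx /=.
rewrite (_ : (size u + (size w0 + size v) - size v = size (u ++ w0))%N); last first.
  by rewrite size_cat; lia.
by rewrite catA drop_size_cat // eqxx andbT; lia.
Qed.

Lemma sandwich_cat u v (x : felem R) w0 : sandwich u v x (u ++ w0 ++ v) = x w0.
Proof.
case: sandwichP => [w1 /cat_middle_inj -> //|hn].
by case: (hn w0).
Qed.

Lemma sandwich_comp u v u' v' (x : felem R) w :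
  sandwich u v (sandwich u' v' x) w = sandwich (u ++ u') (v' ++ v) x w.
Proof.
case: (sandwichP u v (sandwich u' v' x) w) => [w0 ->|hn].
  case: (sandwichP u' v' x w0) => [w1 ->|hn1].
    by rewrite (_ : u ++ _ ++ v = (u ++ u') ++ w1 ++ v' ++ v) ?sandwich_cat // !catA.
  case: sandwichP => [w2 hw2|//]; case: (hn1 w2).
  by apply: (@cat_middle_inj _ u v); rewrite hw2 !catA.
case: sandwichP => [w2 hw2|//]; case: (hn (u' ++ w2 ++ v')).
by rewrite hw2 !catA.
Qed.

Lemma ideal_sandwich u v (x : felem R) :
  all (inrng P 2) u -> all (inrng P 2) v -> I x -> I (sandwich u v x).
Proof.
move=> hu hv; elim=> [|x1 y1 _ h1 _ h2|c x1 _ h1|u' v' rho hu' hv' hrho].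
- by apply: ideal_eq (ideal0 P 2) _ => w; rewrite /sandwich; case: ifP.
- apply: ideal_eq (idealD h1 h2) _ => w.
  by rewrite /sandwich /fadd; case: ifP; rewrite ?addr0.
- apply: ideal_eq (idealZ c h1) _ => w.
  by rewrite /sandwich /fscale; case: ifP; rewrite ?mulr0.
- apply: ideal_eq (idealG (u := u ++ u') (v := v' ++ v) _ _ hrho) _.
  + by rewrite all_cat hu hu'.
  + by rewrite all_cat hv' hv.
  + by move=> w; rewrite sandwich_comp.
Qed.

Lemma sandwich_cons j u v (x : felem R) k w :
  sandwich (j :: u) v x (k :: w) = if k == j then sandwich u v x w else 0.
Proof.
case: (sandwichP (j :: u) v x (k :: w)) => [w0 [-> ->]|hn].
  by rewrite eqxx sandwich_cat.
case: eqP => // hkj; case: sandwichP => [w1 hw1|//].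
by case: (hn w1); rewrite hkj hw1.
Qed.

Lemma sandwich_nil j u v (x : felem R) : sandwich (j :: u) v x [::] = 0.
Proof. by case: sandwichP. Qed.

Lemma tauL_zero : tauL P (fzero R) = fzero R.
Proof.
apply: functional_extensionality => -[|k w] //=.
by case: ifP => // _; rewrite big1 // => j _; rewrite mulr0.
Qed.

Lemma tauL_add (x y : felem R) : tauL P (fadd x y) = fadd (tauL P x) (tauL P y).
Proof.
apply: functional_extensionality => -[|k w]; rewrite /fadd /= ?addr0 //.
by case: ifP; rewrite ?addr0 // -big_split; under eq_bigr do rewrite mulrDr.
Qed.

Lemma tauL_scale c (x : felem R) : tauL P (fscale c x) = fscale c (tauL P x).
Proof.
apply: functional_extensionality => -[|k w]; rewrite /fscale /= ?mulr0 //.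
by case: ifP; rewrite ?mulr0 // mulr_sumr; under eq_bigr do rewrite mulrCA.
Qed.

Lemma tauL_sub (x y : felem R) : tauL P (fsub x y) = fsub (tauL P x) (tauL P y).
Proof.
have -> : fsub x y = fadd x (fscale (-1) y).
  by apply: functional_extensionality => w; rewrite /fadd /fscale mulN1r.
rewrite tauL_add tauL_scale; apply: functional_extensionality => w.
by rewrite /fadd /fscale mulN1r.
Qed.

Lemma tauL_sandwich_cons j u v (x : felem R) : (2 <= j)%N ->
  tauL P (sandwich (j :: u) v x) =1 fun w =>
    \sum_(2 <= k < n.+1) (if (j < k)%N then b j 1 k else 0) * sandwich (k :: u) v x w.
Proof.
move=> hj [|k w] /=.
  by rewrite big1 // => k _; rewrite sandwich_nil mulr0.
rewrite (eq_bigr (fun j' => if j' == j then b j 1 k * sandwich u v x w else 0)); last first.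
  by move=> j' _; rewrite sandwich_cons; case: eqP => [->|]; rewrite ?mulr0.
rewrite [RHS](eq_bigr (fun k' => if k' == k then
    (if (j < k')%N then b j 1 k' else 0) * sandwich u v x w else 0)); last first.
  by move=> k' _; rewrite sandwich_cons eq_sym; case: eqP; rewrite ?mulr0.
rewrite !sum_nat_delta hj /=.
by case: (ltnP j k) => hjk; case: ifP => hk; case: ifP => ?; rewrite ?mul0r //; lia.
Qed.

Lemma tauL_sandwich_nil v (x : felem R) : x [::] = 0 ->
  tauL P (sandwich [::] v x) = sandwich [::] v (tauL P x).
Proof.
move=> x0; apply: functional_extensionality => -[|k w] /=.
  by case: sandwichP => // -[|? ?] // [].
case: (sandwichP [::] v (tauL P x) (k :: w)) => [[/= hv|k0 w0 [<- ->]]|hn] /=.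
- case: ifP => // _; rewrite big1 // => j _.
  case: sandwichP => [[|? ?] /= hw|]; rewrite ?x0 ?mulr0 //.
  by move: (congr1 size hw) (congr1 size hv) => /=; rewrite size_cat; lia.
- case: ifP => // _; apply: eq_bigr => j _.
  by rewrite (sandwich_cat [::] v x (j :: w0)).
- case: ifP => // _; rewrite big1 // => j _.
  case: sandwichP => [[|j' w1] /= hw|]; rewrite ?x0 ?mulr0 //.
  by case: hw => _ hw; case: (hn (k :: w1)); rewrite hw.
Qed.

Lemma inF_tauL x : inF P 2 x -> inF P 2 (tauL P x).
Proof.
case=> [[s hs] hx]; have hsupp k w' : tauL P x (k :: w') != 0 ->
    [/\ (k <= n)%N & exists2 j, (2 <= j < k)%N & x (j :: w') != 0].
  rewrite /=; case: ifP => [hk|]; last by rewrite eqxx.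
  case/sum_nat_neq0 => j hj; have [->|hxj] := eqVneq (x (j :: w')) 0.
    by rewrite mulr0 eqxx.
  by split=> //; exists j.
split.
  exists [seq k :: behead u | k <- iota 0 n.+1, u <- s] => -[|k w'].
    by rewrite /= eqxx.
  case/hsupp => hk [j _ /hs hj].
  by apply: (allpairs_f (fun k u => k :: behead u) _ hj); rewrite mem_iota; range.
move=> -[|k w'] /=; first by rewrite eqxx.
case/hsupp => hk [j hj /hx [_ /= /andP[_ ->]]]; split=> //.
by rewrite andbT /inrng; range.
Qed.

End FreeAlgebra.

Section Vectors.
Variables (R : comNzRingType) (P : presentation R).
Local Notation n := (pn P).
Local Notation r := (pr P).
Local Notation e := (pe P).
Local Notation b := (pb P).
Local Notation I := (ideal P 2).
Local Notation cm := (cmul P).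
Local Notation g := (cgen R).

Lemma fword1 m k : fword R [:: m] [:: k] = (k == m)%:R.
Proof. by rewrite /fword eqseq_cons andbT. Qed.

Lemma sum_fword_lin a (c : cvec R) w :
  \sum_(a <= k < n.+1) c k * fword R [:: k] w = lin P a c w.
Proof.
case: w => [|k [|? ?]] /=.
- by rewrite big1 // => l _; rewrite /fword /= mulr0.
- by under eq_bigr do rewrite fword1; rewrite sum_nat_mul_delta.
- by rewrite big1 // => l _; rewrite /fword /= eqseq_cons andbF mulr0.
Qed.

Definition vanishes (y : cvec R) : Prop := I (lin P 2 y).

Lemma vanishes_eq y z : vanishes y -> (forall k, inrng P 2 k -> y k = z k) -> vanishes z.
Proof.
move=> hy hyz; apply: ideal_eq hy _ => -[|k [|? ?]] //=.
by case: ifP => // /hyz.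
Qed.

Lemma vanishes0 y : (forall k, inrng P 2 k -> y k = 0) -> vanishes y.
Proof.
move=> y0; apply: ideal_eq (ideal0 P 2) _ => -[|k [|? ?]] //=.
by case: ifP => // /y0.
Qed.

Lemma vanishesD y c z : vanishes y -> vanishes z -> vanishes (fun k => y k + c * z k).
Proof.
move=> hy hz; apply: ideal_eq (idealD hy (idealZ c hz)) _ => -[|k [|? ?]];
  rewrite /fadd /fscale /= ?mulr0 ?addr0 //.
by case: ifP; rewrite ?mulr0 ?addr0.
Qed.

Definition powvec (m : nat) : cvec R := fun k =>
  if r m is Some q then
    if k == m then q%:R else if (m < k <= n)%N then - e m k else 0
  else 0.

Lemma powrelE m q : inrng P 2 m -> r m = Some q -> powrel P m q = lin P 2 (powvec m).
Proof.
move=> hm hr; apply: functional_extensionality => w; rewrite /powrel sum_fword_lin.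
case: w => [|k [|? ?]] /=; rewrite ?fword1 /powvec ?hr.
- by rewrite /fword /= mulr0 subr0.
- case: eqP => [->|hkm] /=; first by rewrite mulr1 hm; case: ifP => [?|]; [range | rewrite subr0].
  by rewrite mulr0 sub0r; repeat case: ifP => ?; rewrite ?oppr0 //; range.
- by rewrite /fword /= eqseq_cons andbF mulr0 subr0.
Qed.

Lemma vanishes_powvec m : inrng P 2 m -> vanishes (powvec m).
Proof.
move=> hm; case hr: (r m) => [q|].
  by rewrite /vanishes -(powrelE hm hr); apply: ideal_rel; left; exists m, q.
by apply: vanishes0 => k _; rewrite /powvec hr.
Qed.

Lemma powvec_out m k : inrng P 2 m -> ~~ inrng P 2 k -> powvec m k = 0.
Proof.
move=> hm hk; rewrite /powvec; case: (r m) => // q.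
by repeat case: ifP => ? //; range.
Qed.

Lemma cmul_genl j y k : inrng P 1 j ->
  cm (g j) y k = if inrng P 1 k then
    \sum_(1 <= i < n.+1) (if (maxn i j < k)%N then y i * b i j k else 0) else 0.
Proof.
move=> hj; rewrite /cmul; case: ifP => // _.
rewrite (eq_bigr (fun j' => if j' == j then
   \sum_(1 <= i < n.+1) (if (maxn i j < k)%N then y i * b i j k else 0) else 0)).
  by rewrite sum_nat_delta; case: ifP => //; range.
move=> j' _; rewrite /cgen; case: eqP => [->|_].
  by apply: eq_bigr => i _; rewrite mul1r.
by apply: big1 => i _; case: ifP; rewrite ?mul0r.
Qed.

Lemma cmul_genr y i k : inrng P 1 i ->
  cm y (g i) k = if inrng P 1 k then
    \sum_(1 <= j < n.+1) (if (maxn i j < k)%N then y j * b i j k else 0) else 0.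
Proof.
move=> hi; rewrite /cmul; case: ifP => // _; apply: eq_bigr => j _.
rewrite (eq_bigr (fun i' => if i' == i then
   (if (maxn i j < k)%N then y j * b i j k else 0) else 0)).
  by rewrite sum_nat_delta; case: ifP => //; range.
move=> i' _; rewrite /cgen; case: eqP => [->|_]; first by rewrite mulr1.
by case: ifP; rewrite ?mulr0 ?mul0r.
Qed.

Lemma cmul_gen j i k : inrng P 1 j -> inrng P 1 i ->
  cm (g j) (g i) k = if inrng P 1 k && (maxn i j < k)%N then b i j k else 0.
Proof.
move=> hj hi; rewrite cmul_genl //; case: ifP => //= hk.
rewrite (eq_bigr (fun i' => if i' == i then
   (if (maxn i j < k)%N then b i j k else 0) else 0)).
  by rewrite sum_nat_delta; case: ifP => //; range.
move=> i' _; rewrite /cgen; case: eqP => [->|_] /=; first by rewrite mul1r.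
by case: ifP; rewrite ?mul0r.
Qed.

Lemma cmul_at1 y z : cm y z 1%N = 0.
Proof.
rewrite /cmul; case: ifP => // _; rewrite big_nat_cond; apply: big1 => j /andP[hj _].
by rewrite big_nat_cond; apply: big1 => i /andP[hi _]; case: ifP => //; lia.
Qed.

Lemma cmul0r y k : cm y (fun _ => 0) k = 0.
Proof.
rewrite /cmul; case: ifP => // _; apply: big1 => j _; apply: big1 => i _.
by case: ifP; rewrite ?mulr0 ?mul0r.
Qed.

Lemma cmul0l y k : cm (fun _ => 0) y k = 0.
Proof.
rewrite /cmul; case: ifP => // _; apply: big1 => j _; apply: big1 => i _.
by case: ifP; rewrite ?mulr0 ?mul0r.
Qed.

Lemma cmulDr u y c z k : cm u (fun k => y k + c * z k) k = cm u y k + c * cm u z k.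
Proof.
rewrite /cmul; case: ifP => _; last by rewrite mulr0 addr0.
rewrite mulr_sumr -big_split; apply: eq_bigr => j _.
rewrite mulr_sumr -big_split; apply: eq_bigr => i _ /=.
by case: ifP => _; [ring | rewrite mulr0 addr0].
Qed.

Lemma cmulDl u y c z k : cm (fun k => y k + c * z k) u k = cm y u k + c * cm z u k.
Proof.
rewrite /cmul; case: ifP => _; last by rewrite mulr0 addr0.
rewrite mulr_sumr -big_split; apply: eq_bigr => j _.
rewrite mulr_sumr -big_split; apply: eq_bigr => i _ /=.
by case: ifP => _; [ring | rewrite mulr0 addr0].
Qed.

Lemma cmulZr u c y k : cm u (fun k => c * y k) k = c * cm u y k.
Proof.
rewrite /cmul; case: ifP => _; last by rewrite mulr0.
rewrite mulr_sumr; apply: eq_bigr => j _; rewrite mulr_sumr; apply: eq_bigr => i _.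
by case: ifP => _; [ring | rewrite mulr0].
Qed.

Lemma tauL_lin y : y 1%N = 0 -> tauL P (lin P 2 y) = lin P 2 (cm (g 1) y).
Proof.
move=> y1; apply: functional_extensionality => -[|k [|? ?]] //=; last first.
  by case: ifP => // _; rewrite big1 // => j _; rewrite mulr0.
case: (leqP k n) => hkn; last by case: ifP => //; range.
case: (leqP k 1) => hk1.
  by rewrite big_geq ?(leq_trans hk1) //; case: ifP => // ?; range.
have hk2 : inrng P 2 k by range.
have hk : inrng P 1 k by range.
rewrite hk2 cmul_genl ?hk; last by range.
rewrite [RHS]big_ltn ?y1 ?mul0r ?if_same ?add0r; last by range.
rewrite (big_nat_widen _ _ _ _ _ (leqW hkn)) big_mkcond /=.
apply: eq_big_nat => j hj; rewrite (maxn_idPl _); last by range.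
case: ifP => // hjk; have -> : inrng P 2 j by range.
by rewrite mulrC.
Qed.

Lemma mulrelE i j : inrng P 1 i -> inrng P 1 j ->
  mulrel P i j = fsub (fword R [:: j; i]) (lin P 2 (cm (g j) (g i))).
Proof.
move=> hi hj; apply: functional_extensionality => w.
rewrite /mulrel /fsub sum_fword_lin; congr (_ - _).
case: w => [|k [|? ?]] //=; rewrite cmul_gen //.
by repeat case: ifP => ? //=; range.
Qed.

Lemma ideal_lin_mulr y i : y 1%N = 0 -> inrng P 2 i ->
  I (fsub (sandwich [::] [:: i] (lin P 2 y)) (lin P 2 (cm y (g i)))).
Proof.
move=> y1 hi.
have hrel : I (fun w => \sum_(2 <= k < n.+1) y k * mulrel P i k w).
  apply: ideal_sum => k; rewrite mem_index_iota => hk.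
  by apply: ideal_rel; right; exists i, k; do !split=> //; range.
apply: ideal_eq hrel _ => w.
rewrite (eq_big_nat _ _ (fun k hk => congr1 (fun x => y k * x w) (mulrelE _ _))); try range.
rewrite /fsub; under eq_bigr do rewrite mulrBr; rewrite sumrB; congr (_ - _).
  case: (sandwichP [::] [:: i] (lin P 2 y) w) => [w0 ->|hn] /=.
    rewrite -sum_fword_lin; apply: eq_bigr => k _; congr (_ * _).
    by rewrite /fword cats1 -[[:: k; i]]/(rcons [:: k] i) eqseq_rcons eqxx andbT.
  rewrite big1 // => k _; rewrite /fword; case: eqP => [hw|]; last by rewrite mulr0.
  by case: (hn [:: k]); rewrite hw.
case: w => [|a [|? ?]] /=; try by rewrite big1 // => k _; rewrite mulr0.
case: ifP => ha; last by rewrite big1 // => k _; rewrite mulr0.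
have ha1 : inrng P 1 a by range.
rewrite cmul_genr ?ha1; last by range.
rewrite [RHS]big_ltn ?y1 ?mul0r ?if_same ?add0r; last by range.
apply: eq_big_nat => k hk; rewrite cmul_gen ?ha1 //=; try range.
by case: ifP; rewrite ?mulr0 // mulrC.
Qed.

Lemma vanishes_cmul_powvec_gen m i : inrng P 2 m -> inrng P 2 i ->
  vanishes (cm (powvec m) (g i)).
Proof.
move=> hm hi; have pm1 : powvec m 1%N = 0 by apply: powvec_out; rewrite // /inrng.
have hs : I (sandwich [::] [:: i] (lin P 2 (powvec m))).
  by apply: ideal_sandwich (vanishes_powvec hm); rewrite //= hi.
apply: ideal_eq (ideal_sub hs (ideal_lin_mulr pm1 hi)) _ => w.
by rewrite /fsub opprB addrC subrK.
Qed.

Inductive powspan (a : nat) : cvec R -> Prop :=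
| powspan0 : powspan a (fun _ => 0)
| powspanS m c y : (a <= m <= n)%N -> powspan a y ->
    powspan a (fun k => y k + c * powvec m k).

Lemma powspan_vanishes_map (f : cvec R -> cvec R) a y :
  (forall k, f (fun _ => 0) k = 0) ->
  (forall y c m k, f (fun k => y k + c * powvec m k) k = f y k + c * f (powvec m) k) ->
  (forall m, (a <= m <= n)%N -> vanishes (f (powvec m))) ->
  powspan a y -> vanishes (f y).
Proof.
move=> f0 fD fm; elim=> [|m c y' hm _ IH]; first exact: vanishes0.
by apply: vanishes_eq (vanishesD c IH (fm m hm)) _ => k _; rewrite fD.
Qed.

Lemma powspan_vanishes a y : (2 <= a)%N -> powspan a y -> vanishes y.
Proof.
move=> ha; apply: (@powspan_vanishes_map id) => // m hm.
by apply: vanishes_powvec; range.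
Qed.

Lemma powspan_at1 a y : (2 <= a)%N -> powspan a y -> y 1%N = 0.
Proof.
move=> ha; elim=> // m c y' hm _ ->.
by rewrite powvec_out ?mulr0 ?addr0 // /inrng; lia.
Qed.

Lemma vanishes_cmul_powspan_gen a p i : (2 <= a)%N -> powspan a p -> inrng P 2 i ->
  vanishes (cm p (g i)).
Proof.
move=> ha hp hi; apply: (@powspan_vanishes_map (fun y => cm y (g i)) a) => //.
- by move=> k; rewrite cmul0l.
- by move=> y c m k; rewrite cmulDl.
- by move=> m hm; apply: vanishes_cmul_powvec_gen; range.
Qed.

Lemma vanishes_cmul_powspan u a p :
  (forall m, (a <= m <= n)%N -> vanishes (cm u (powvec m))) -> powspan a p ->
  vanishes (cm u p).
Proof.
move=> um; apply: (@powspan_vanishes_map (cm u)) => //.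
- by move=> k; rewrite cmul0r.
- by move=> y c m k; rewrite cmulDr.
Qed.

Lemma fword_pair j i : inrng P 2 j ->
  fword R [:: j; i] = sandwich [::] [:: i] (lin P 2 (g j)).
Proof.
move=> hj; apply: functional_extensionality => w'.
case: (sandwichP [::] [:: i] (lin P 2 (g j)) w') => [[|k [|? l]] -> |hn] /=.
- by rewrite /fword; case: eqP.
- rewrite /fword /cgen !eqseq_cons eqxx !andbT.
  by case: (eqVneq k j) => [->|_]; rewrite ?hj ?if_same.
- rewrite /fword (_ : (_ == _) = false) //.
  by apply/eqP => /(congr1 size); rewrite /= size_cat /=; lia.
- by rewrite /fword; case: eqP => // hw; case: (hn [:: j]); rewrite hw.
Qed.

Lemma rel_nil rho : isrel P 2 rho -> rho [::] = 0.
Proof.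
case=> [[m [q [hm [hr ->]]]]|[i [j [hi [hj ->]]]]].
  by rewrite powrelE.
by rewrite mulrelE; try range; rewrite /fsub /fword /= subr0.
Qed.

End Vectors.

Section Weights.
Variables (R : comNzRingType) (P : presentation R) (w : nat -> nat).
Hypothesis wP : weight_ok P w.

Definition weight_ge (y : cvec R) (A : nat) : Prop :=
  forall k, inrng P 1 k -> y k != 0 -> (A <= w k)%N.

Lemma weight_ge_gen j : weight_ge (cgen R j) (w j).
Proof. by move=> k _; rewrite /cgen; case: (eqVneq k j) => [-> //|_]; rewrite eqxx. Qed.

Lemma weight_ge_powvec m : inrng P 1 m -> weight_ge (powvec P m) (w m).
Proof.
move=> hm k hk; rewrite /powvec; case hr: (pr P m) => [q|]; last by rewrite eqxx.
case: (eqVneq k m) => [-> //|_]; case: ifP => [hmk|_]; last by rewrite eqxx.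
rewrite oppr_eq0 => emk; case: wP => _ [we _].
by apply: (we m k) => //; [range | rewrite hr].
Qed.

Lemma weight_ge_cmul y z A B :
  weight_ge y A -> weight_ge z B -> weight_ge (cmul P y z) (A + B).
Proof.
move=> hy hz k hk; apply: contraR; rewrite -ltnNge => hlt.
rewrite /cmul hk big_nat_cond; apply/eqP/big1 => j /andP[hj _].
rewrite big_nat_cond; apply: big1 => i /andP[hi _].
case: ifP => // hij.
have [->|yj] := eqVneq (y j) 0; first by rewrite !mul0r.
have [->|zi] := eqVneq (z i) 0; first by rewrite mulr0 mul0r.
have [->|bij] := eqVneq (pb P i j k) 0; first by rewrite mulr0.
case: wP => _ [_ wb]; have := wb i j k _ _ hk hij bij.
have := hy j _ yj; have := hz i _ zi; rewrite /inrng; lia.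
Qed.

Lemma weight_ge_vanish y A : weight_ge y A -> (wmax P w < A)%N ->
  forall k, inrng P 1 k -> y k = 0.
Proof.
move=> hy hA k hk; apply/eqP; apply: contraT => yk.
have := hy k hk yk; have : (w k <= wmax P w)%N.
  by apply: (@leq_bigmax_seq _ _ predT w k) => //; rewrite mem_index_iota; range.
lia.
Qed.

End Weights.

Arguments weight_ge_gen {R P} w j.

Section Collection.
Variables (R : comNzRingType) (cdiv : R -> nat -> R * R) (P : presentation R).
Local Notation n := (pn P).
Local Notation C := (collect cdiv P).
Local Notation g := (cgen R).

Hypothesis cdivP : forall m q x, inrng P 1 m -> pr P m = Some q ->
  x = (cdiv x q).1 * q%:R + (cdiv x q).2.
Hypothesis cdiv0 : forall m q, inrng P 1 m -> pr P m = Some q -> cdiv 0 q = (0, 0).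
Hypothesis cdivqq : forall m q, inrng P 2 m -> pr P m = Some q -> cdiv q%:R q = (1, 0).

Local Notation cfold := (foldl (fun v m => cstep cdiv P m v)).

Lemma cstep_powvec m y : inrng P 1 m ->
  exists c, forall k, cstep cdiv P m y k = y k + c * powvec P m k.
Proof.
move=> hm; rewrite /cstep /powvec; case hr: (pr P m) => [q|]; last first.
  by exists 0 => k; rewrite mulr0 addr0.
move: (cdivP (y m) hm hr); case: (cdiv (y m) q) => d rem /= ym.
exists (- d) => k; case: eqP => [->|_]; first by rewrite ym; ring.
by case: ifP => _; [ring | rewrite mulr0 addr0].
Qed.

Lemma cstep_id m y : inrng P 1 m -> y m = 0 -> cstep cdiv P m y = y.
Proof.
move=> hm ym; apply: functional_extensionality => k; rewrite /cstep.
case hr: (pr P m) => [q|] //; rewrite ym (cdiv0 hm hr) /=.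
by case: eqP => [->|_]; rewrite ?ym // mul0r addr0; case: ifP.
Qed.

Lemma cfold_id s y : (forall m, m \in s -> inrng P 1 m /\ y m = 0) -> cfold y s = y.
Proof.
elim: s => //= m s IH hs; have [hm ym] := hs m (mem_head m s).
by rewrite cstep_id // IH // => m' hm'; apply: hs; rewrite inE hm' orbT.
Qed.

Lemma cfold_powspan a s y : (1 <= a)%N -> all (fun m => a <= m <= n)%N s ->
  exists2 p, powspan P a p & forall k, cfold y s k = y k + p k.
Proof.
move=> ha; elim: s y => [|m s IH] y /=.
  by exists (fun _ => 0) => [|k]; [exact: powspan0 | rewrite addr0].
case/andP=> hm hs; have [c hc] := @cstep_powvec m y ltac:(range).
have [p hp ep] := IH (cstep cdiv P m y) hs.
exists (fun k => p k + c * powvec P m k); first exact: powspanS.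
by move=> k; rewrite ep hc; ring.
Qed.

Lemma collect_powspan y : y 1%N = 0 ->
  exists2 p, powspan P 2 p & forall k, C y k = y k + p k.
Proof.
move=> y1; rewrite /collect; case hn: n => [|n'] /=.
  by exists (fun _ => 0) => [|k]; [exact: powspan0 | rewrite addr0].
rewrite cstep_id //; last by rewrite /inrng hn.
apply: cfold_powspan => //; apply/allP => m; rewrite mem_iota hn; lia.
Qed.

Lemma collect_scale_gen m q : inrng P 2 m -> pr P m = Some q ->
  exists2 p, powspan P m.+1 p &
    forall k, C (cscale q (g m)) k = q%:R * g m k - powvec P m k + p k.
Proof.
move=> hm hr; rewrite /collect.
have -> : iota 1 n = iota 1 m.-1 ++ m :: iota m.+1 (n - m).
  rewrite {1}(_ : n = m.-1 + (n - m).+1)%N ?iotaD; last by range.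
  by rewrite (_ : 1 + m.-1 = m)%N //; range.
rewrite foldl_cat (@cfold_id (iota 1 m.-1)); last first.
  move=> m'; rewrite mem_iota => hm'; split; first by range.
  by rewrite /cscale /cgen (_ : (m' == m) = false) ?mulr0 //; apply/eqP; lia.
rewrite /=; set z := cstep cdiv P m _.
have ez : forall k, z k = q%:R * g m k - powvec P m k.
  move=> k; rewrite /z /cstep /powvec hr /cscale /cgen eqxx mulr1 (cdivqq hm hr) /=.
  case: (eqVneq k m) => [_|_] /=; first by rewrite mulr1 subrr.
  by rewrite mulr0 sub0r add0r; case: ifP; rewrite ?mul1r ?opprK ?oppr0.
have [p hp ep] : exists2 p, powspan P m.+1 p &
    forall k, cfold z (iota m.+1 (n - m)) k = z k + p k.
  by apply: cfold_powspan => //; apply/allP => m'; rewrite mem_iota; range.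
by exists p => // k; rewrite ep ez.
Qed.

Section Tau.
Variable w : nat -> nat.
Hypothesis wP : weight_ok P w.
Hypothesis testP : test_eqs cdiv P w.
Local Notation I := (ideal P 2).
Local Notation cm := (cmul P).

(* Collecting q a_m only adds power relations of the a_m' with m' > m. *)
Lemma vanishes_cmul1_powvec m : inrng P 2 m -> vanishes P (cm (g 1) (powvec P m)).
Proof.
have [t] := ubnP (n - m); elim: t m => // t IH m ht hm.
have [hm1 h11] : inrng P 1 m /\ inrng P 1 1 by split; range.
case hr: (pr P m) => [q|]; last by apply: vanishes0 => k _; rewrite /powvec hr cmul0r.
case: (leqP (w 1 + w m) (wmax P w)) => hw; last first.
  have heavy := weight_ge_cmul wP (weight_ge_gen w 1) (weight_ge_powvec wP hm1).
  by apply: vanishes0 => k hk; apply: (weight_ge_vanish heavy hw); range.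
have test := testP.2.2 m 1 q hm1 h11 hr hw.
have [p1 hp1 e1] := collect_powspan (cmul_at1 P (g 1) (g m)).
have y1 : cscale q (C (cm (g 1) (g m))) 1%N = 0.
  by rewrite /cscale e1 cmul_at1 (powspan_at1 _ hp1) // addr0 mulr0.
have [p2 hp2 e2] := collect_powspan y1.
have [p3 hp3 e3] := collect_scale_gen hm hr.
have [p4 hp4 e4] := collect_powspan (cmul_at1 P (g 1) (C (cscale q (g m)))).
have a1p3 : vanishes P (cm (g 1) p3).
  by apply: vanishes_cmul_powspan hp3 => m' hm'; apply: IH; range.
have v1 := powspan_vanishes (leqnn 2) hp1.
have v2 := powspan_vanishes (leqnn 2) hp2.
have v4 := powspan_vanishes (leqnn 2) hp4.
apply: (vanishes_eq (vanishesD (-1) (vanishesD (- q%:R) (vanishesD 1 v4 a1p3) v1) v2)).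
move=> k hk; have := test k; rewrite e2 /cscale e1 e4.
rewrite (_ : C (cscale q (g m)) = fun k => q%:R * g m k + (-1) * powvec P m k + 1 * p3 k);
  last by apply: functional_extensionality => k'; rewrite e3; ring.
rewrite !cmulDr cmulZr => E.
by apply: (eq_of_sub_eq (E _)); [range | ring].
Qed.

Lemma vanishes_cmul1_assoc j i : inrng P 2 j -> inrng P 2 i ->
  vanishes P (fun k => cm (cm (g 1) (g j)) (g i) k - cm (g 1) (cm (g j) (g i)) k).
Proof.
move=> hj hi; have [hi1 hj1 h11] : [/\ inrng P 1 i, inrng P 1 j & inrng P 1 1].
  by split; range.
case: (leqP (w 1 + w j + w i) (wmax P w)) => hw; last first.
  have heavyL := weight_ge_cmul wP
    (weight_ge_cmul wP (weight_ge_gen w 1) (weight_ge_gen w j)) (weight_ge_gen w i).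
  have heavyR := weight_ge_cmul wP
    (weight_ge_gen w 1) (weight_ge_cmul wP (weight_ge_gen w j) (weight_ge_gen w i)).
  apply: vanishes0 => k hk; have hk1 : inrng P 1 k by range.
  rewrite (weight_ge_vanish heavyL hw hk1) (weight_ge_vanish heavyR _ hk1) ?subrr //.
  by rewrite addnA.
have test := testP.1 i j 1 hi1 hj1 h11 hw.
have [p1 hp1 e1] := collect_powspan (cmul_at1 P (g j) (g i)).
have [p2 hp2 e2] := collect_powspan (cmul_at1 P (g 1) (C (cm (g j) (g i)))).
have [p3 hp3 e3] := collect_powspan (cmul_at1 P (g 1) (g j)).
have [p4 hp4 e4] := collect_powspan (cmul_at1 P (C (cm (g 1) (g j))) (g i)).
have a1p1 : vanishes P (cm (g 1) p1).
  by apply: vanishes_cmul_powspan hp1 => m hm; apply: vanishes_cmul1_powvec; range.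
have p3ai := vanishes_cmul_powspan_gen (leqnn 2) hp3 hi.
have v2 := powspan_vanishes (leqnn 2) hp2.
have v4 := powspan_vanishes (leqnn 2) hp4.
apply: (vanishes_eq (vanishesD (-1) (vanishesD (-1) (vanishesD 1 a1p1 v2) p3ai) v4)).
move=> k hk; have := test k; rewrite e2 e4.
rewrite (_ : C (cm (g j) (g i)) = fun k => cm (g j) (g i) k + 1 * p1 k);
  last by apply: functional_extensionality => k'; rewrite e1 mul1r.
rewrite (_ : C (cm (g 1) (g j)) = fun k => cm (g 1) (g j) k + 1 * p3 k);
  last by apply: functional_extensionality => k'; rewrite e3 mul1r.
rewrite cmulDr cmulDl => E.
by apply: (eq_of_sub_eq (esym (E _))); [range | ring].
Qed.

Lemma ideal_tauL_powrel m q : inrng P 2 m -> pr P m = Some q -> I (tauL P (powrel P m q)).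
Proof.
move=> hm hr; rewrite powrelE // tauL_lin; first exact: vanishes_cmul1_powvec.
by apply: powvec_out; rewrite // /inrng.
Qed.

Lemma ideal_tauL_mulrel i j : inrng P 2 i -> inrng P 2 j -> I (tauL P (mulrel P i j)).
Proof.
move=> hi hj; rewrite mulrelE; try range.
have gj1 : g j 1%N = 0 by rewrite /cgen; case: eqP => // ?; range.
rewrite tauL_sub (fword_pair i hj) tauL_sandwich_nil // !tauL_lin ?cmul_at1 //.
have hL := ideal_lin_mulr (cmul_at1 P (g 1) (g j)) hi.
apply: ideal_eq (idealD hL (vanishes_cmul1_assoc hj hi)) _ => w'.
rewrite /fsub /fadd; case: w' => [|k [|? ?]] /=; rewrite ?subr0 ?addr0 //.
case: ifP => _; rewrite ?subr0 ?addr0 //.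
by rewrite addrA subrK.
Qed.

Lemma ideal_tauL_rel rho : isrel P 2 rho -> I (tauL P rho).
Proof.
case=> [[m [q [hm [hr ->]]]]|[i [j [hi [hj ->]]]]].
  exact: ideal_tauL_powrel.
exact: ideal_tauL_mulrel.
Qed.

Lemma ideal_tauL x : I x -> I (tauL P x).
Proof.
elim=> [|x1 y1 _ h1 _ h2|c x1 _ h1|u v rho hu hv hrho].
- by rewrite tauL_zero; apply: ideal0.
- by rewrite tauL_add; apply: idealD.
- by rewrite tauL_scale; apply: idealZ.
case: u hu => [|j u] /= hu.
  rewrite tauL_sandwich_nil; last exact: rel_nil hrho.
  exact: ideal_sandwich (ideal_tauL_rel hrho).
case/andP: hu => hj hu; have hj2 : (2 <= j)%N by range.
apply: ideal_eq (fsym (@tauL_sandwich_cons R P j u v rho hj2)).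
apply: ideal_sum => k; rewrite mem_index_iota => hk.
by apply: idealG; rewrite //= hu andbT; range.
Qed.

Lemma tauL_induces : induces_linear_map P 2 (tauL P).
Proof.
split; [exact: inF_tauL | split; last exact: ideal_tauL].
by move=> c x y; rewrite tauL_add tauL_scale.
Qed.

End Tau.

End Collection.

Section Opposite.
Variable R : comNzRingType.

Definition opp_pres (P : presentation R) : presentation R :=
  Pres (pn P) (pr P) (pe P) (fun i j k => pb P j i k).

Definition frev (x : felem R) : felem R := fun w => x (rev w).

Lemma opp_presK : involutive opp_pres.
Proof. by case. Qed.

Lemma tauR_rev P x : tauR P x = frev (tauL (opp_pres P) (frev x)).
Proof.
apply: functional_extensionality => -[|h t] //; rewrite /frev /=.
rewrite [h :: t]lastI rev_rcons /=; case: ifP => // _; apply: eq_bigr => j _.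
by rewrite rev_cons revK.
Qed.

Lemma sandwich_rev u v (x : felem R) w :
  sandwich u v x (rev w) = sandwich (rev v) (rev u) (frev x) w.
Proof.
case: (sandwichP u v x (rev w)) => [w0 hw|hn].
  by rewrite -[w]revK hw !rev_cat -catA sandwich_cat /frev revK.
case: sandwichP => [w1 hw1|//]; case: (hn (rev w1)).
by rewrite hw1 !rev_cat !revK catA.
Qed.

Lemma isrel_rev P rho : isrel P 2 rho -> isrel (opp_pres P) 2 (frev rho).
Proof.
have fword_rev u w : fword R u (rev w) = fword R (rev u) w.
  by rewrite /fword (can2_eq revK revK).
case=> [[i [q [hi [hq ->]]]]|[i [j [hi [hj ->]]]]].
  left; exists i, q; do !split=> //; apply: functional_extensionality => w.
  rewrite /frev /powrel fword_rev; congr (_ - _).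
  by apply: eq_bigr => k _; rewrite fword_rev.
right; exists j, i; do !split=> //; apply: functional_extensionality => w.
rewrite /frev /mulrel fword_rev /= maxnC; congr (_ - _).
by apply: eq_bigr => k _; rewrite fword_rev.
Qed.

Lemma ideal_rev P x : ideal P 2 x -> ideal (opp_pres P) 2 (frev x).
Proof.
elim=> [|x1 y1 _ h1 _ h2|c x1 _ h1|u v rho hu hv hrho].
- exact: ideal0.
- exact: idealD h1 h2.
- exact: ideal_eq (idealZ c h1) (frefl _).
apply: ideal_eq (idealG (u := rev v) (v := rev u) _ _ (isrel_rev hrho)) _;
  rewrite ?all_rev //.
by move=> w; rewrite /frev sandwich_rev.
Qed.

Lemma inF_rev P x : inF P 2 x -> inF (opp_pres P) 2 (frev x).
Proof.
case=> [[s hs] hx]; split.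
  by exists (map rev s) => w hw; rewrite -[w]revK map_f // hs.
move=> w /hx [hw hall]; split; last by rewrite all_rev in hall.
by apply: contra hw => /eqP; rewrite -[w]revK => ->.
Qed.

Lemma cmul_opp P y z : cmul (opp_pres P) y z = cmul P z y.
Proof.
apply: functional_extensionality => k; rewrite /cmul /inrng /=; case: ifP => // _.
rewrite exchange_big; apply: eq_bigr => j _; apply: eq_bigr => i _.
by rewrite maxnC; case: ifP => // _; rewrite [y i * z j]mulrC.
Qed.

Lemma weight_ok_opp P w : weight_ok P w -> weight_ok (opp_pres P) w.
Proof.
case=> w1 [we wb]; split=> //; split=> // i j k hi hj hk hm hb.
by rewrite addnC; apply: wb; rewrite // maxnC.
Qed.

Lemma test_eqs_opp cdiv P w : test_eqs cdiv P w -> test_eqs cdiv (opp_pres P) w.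
Proof.
case=> [t1 [t2 t3]]; split; [|split].
- move=> i j k hi hj hk hw m hm; rewrite !cmul_opp; symmetry.
  by apply: t1 => //; move: hw; rewrite /wmax /=; lia.
- move=> i j q hi hj hq hw; rewrite !cmul_opp.
  by apply: t3 => //; move: hw; rewrite /wmax /=; lia.
- move=> i j q hi hj hq hw; rewrite !cmul_opp.
  by apply: t2 => //; move: hw; rewrite /wmax /=; lia.
Qed.

End Opposite.

Theorem tau_induce_linear_maps (R : comNzRingType) (cdiv : R -> nat -> R * R)
    (P : presentation R) (w : nat -> nat) :
  (forall m q x, inrng P 1 m -> pr P m = Some q ->
     x = (cdiv x q).1 * q%:R + (cdiv x q).2) ->
  (forall m q, inrng P 1 m -> pr P m = Some q -> cdiv 0 q = (0, 0)) ->
  (forall m q, inrng P 2 m -> pr P m = Some q -> cdiv q%:R q = (1, 0)) ->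
  weight_ok P w -> test_eqs cdiv P w ->
  induces_linear_map P 2 (tauL P) /\ induces_linear_map P 2 (tauR P).
Proof.
move=> cdivP cdiv0 cdivqq wP testP.
split; first exact: (tauL_induces cdivP cdiv0 cdivqq wP testP).
have [inF_L [_ ideal_L]] := @tauL_induces R cdiv (opp_pres P) cdivP cdiv0 cdivqq w
  (weight_ok_opp wP) (test_eqs_opp testP).
have tauRE : tauR P = fun x => frev (tauL (opp_pres P) (frev x)).
  by apply: functional_extensionality => x; rewrite tauR_rev.
split; [|split].
- by rewrite tauRE => x /inF_rev /inF_L /inF_rev; rewrite opp_presK.
- by move=> c x y; rewrite !tauRE tauL_add tauL_scale.
- by rewrite tauRE => x /ideal_rev /ideal_L /ideal_rev; rewrite opp_presK.
Qed.

Theorem lemma22 :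
  (forall (P : presentation int) (w : nat -> nat),
      wf_pres int_range P -> is_weight P w ->
      consistent int_range P 2 -> test_eqs int_div P w ->
      induces_linear_map P 2 (tauL P) /\ induces_linear_map P 2 (tauR P)) /\
  (forall (F : fieldType) (P : presentation F) (w : nat -> nat),
      (forall i, pr P i = None) ->
      wf_pres (@triv_range F) P -> is_weight P w ->
      consistent (@triv_range F) P 2 -> test_eqs (@triv_div F) P w ->
      induces_linear_map P 2 (tauL P) /\ induces_linear_map P 2 (tauR P)).
Proof.
split.
- move=> P w [q_gt0 _] [wP _] _ testP; apply: tau_induce_linear_maps wP testP.
  + by move=> m q x _ _; rewrite /int_div /= natz -divz_eq.
  + by move=> m q _ _; rewrite /int_div div0z mod0z.
  + move=> m q hm hr; have := q_gt0 m q _ hr.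
    by rewrite /int_div natz divzz modzz; case: q {hr} => //; range.
- move=> F P w rNone _ [wP _] _ testP.
  apply: tau_induce_linear_maps wP testP => [m q x _|m q _|m q _]; by rewrite rNone.
Qed.
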